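(* Let $M_{\mathrm{t}}, K, M_{\mathrm{r}}$ be positive integers and let $\bar{\mathbf{W}}=[\bar{\mathbf{W}}_1,\dots,\bar{\mathbf{W}}_K]\in\mathbb{C}^{M_{\mathrm{t}}\times KM_{\mathrm{r}}}$ be any (fully-digital beamforming) matrix of rank $T_{\mathrm{s}}\ge 1$. Let $\bar{\mathbf{W}}=\tilde{\mathbf{V}}_1\tilde{\mathbf{W}}_1$ be a QR decomposition with $\tilde{\mathbf{V}}_1\in\mathbb{C}^{M_{\mathrm{t}}\times T_{\mathrm{s}}}$ semi-unitary ($\tilde{\mathbf{V}}_1^H\tilde{\mathbf{V}}_1=\mathbf{I}_{T_{\mathrm{s}}}$) and $\tilde{\mathbf{W}}_1\in\mathbb{C}^{T_{\mathrm{s}}\times KM_{\mathrm{r}}}$ upper triangular. Let $\tilde{\mathbf{V}}_2=\tilde{\mathbf{V}}_1^H$ and let $\tilde{\mathbf{V}}_2=\tilde{\mathbf{W}}_2\tilde{\mathbf{P}}$ be a QR decomposition with $\tilde{\mathbf{W}}_2\in\mathbb{C}^{T_{\mathrm{s}}\times T_{\mathrm{s}}}$ unitary and $\tilde{\mathbf{P}}\in\mathbb{C}^{T_{\mathrm{s}}\times M_{\mathrm{t}}}$ upper triangular. Let $\mathbf{\Xi}\in\mathbb{C}^{T_{\mathrm{s}}\times T_{\mathrm{s}}}$ be the diagonal matrix whose $i$-th diagonal entry is one half of the largest modulus of the entries of the $i$-th column of $\tilde{\mathbf{P}}^H$, and define $\mathbf{P}\in\mathbb{C}^{M_{\mathrm{t}}\times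 T_{\mathrm{s}}}$ by $\tilde{\mathbf{P}}^H=\mathbf{P}\mathbf{\Xi}$, and $\mathbf{W}_{\mathrm{BB}}=\mathbf{\Xi}\tilde{\mathbf{W}}_2^H\tilde{\mathbf{W}}_1$. Then $\bar{\mathbf{W}}=\mathbf{P}\mathbf{W}_{\mathrm{BB}}$. Moreover, writing $\mathbf{P}^{[i,j]}=a_{[i,j]}e^{\jmath\vartheta_{[i,j]}}$ with amplitude $a_{[i,j]}\ge 0$ and phase $\vartheta_{[i,j]}$, each entry satisfies $\mathbf{P}^{[i,j]}=\mathbf{P}_1^{[i,j]}+\mathbf{P}_2^{[i,j]}$ with the unit-modulus numbers $$\mathbf{P}_1^{[i,j]}=e^{\jmath\left(\cos^{-1}\left(\frac{a_{[i,j]}}{2}\right)+\vartheta_{[i,j]}\right)},\qquad \mathbf{P}_2^{[i,j]}=e^{-\jmath\left(\cos^{-1}\left(\frac{a_{[i,j]}}{2}\right)-\vartheta_{[i,j]}\right)}.$$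
   Context: Setting: hybrid beamforming at a base station with $M_{\mathrm{t}}$ antennas, $T_{\mathrm{s}}$ active RF chains, and $K$ users each with $M_{\mathrm{r}}$ antennas. The analog beamformer $\mathbf{P}\in\mathbb{C}^{M_{\mathrm{t}}\times T_{\mathrm{s}}}$ must have each entry realizable as the sum of two unit-modulus (phase-shifter) complex numbers, i.e. $\mathbf{P}^{[i,j]}=\mathbf{P}_1^{[i,j]}+\mathbf{P}_2^{[i,j]}$ with $|\mathbf{P}_1^{[i,j]}|=|\mathbf{P}_2^{[i,j]}|=1$; $\mathbf{W}_{\mathrm{BB}}$ is the baseband digital beamformer. $\mathbf{X}^{[i,j]}$ denotes the $(i,j)$ entry of a matrix $\mathbf{X}$, $\jmath=\sqrt{-1}$, and $\cos^{-1}$ denotes the principal arccosine. *)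

From HB Require Import structures.
From mathcomp Require Import all_boot all_order all_algebra.
From mathcomp Require Import reals trigo.
From mathcomp.real_closed Require Import complex.
Set Implicit Arguments. Unset Strict Implicit. Unset Printing Implicit Defensive.
Import Order.TTheory GRing.Theory Num.Theory.
Local Open Scope ring_scope.
Local Open Scope complex_scope.

Definition ctrmx {R : realType} {m n : nat} (A : 'M[R[i]]_(m, n)) : 'M[R[i]]_(n, m) :=
  (map_mx (@conjc R) A)^T.

Definition upper_tri {R : realType} {m n : nat} (A : 'M[R[i]]_(m, n)) : Prop :=
  forall (i : 'I_m) (j : 'I_n), (j < i)%N -> A i j = 0.

Definition cmod {R : realType} (z : R[i]) : R := ComplexField.Normc.normc z.

Definition expj {R : realType} (t : R) : R[i] := (cos t +i* sin t).

Definition Xi_of {R : realType} {m n : nat} (A : 'M[R[i]]_(m, n)) : 'M[R[i]]_n :=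
  diag_mx (\row_(i < n) ((1/2 : R) * \big[Num.max/0]_(k < m) cmod (A k i))%:C).

(* The factorisation is pure algebra: P Xi = Pt^H, so
   P Xi W2^H W1 = (W2 Pt)^H W1 = V1 W1 = Wbar.  For the splitting, the sum
   e^{j(phi + theta)} + e^{-j(phi - theta)} equals 2 cos(phi) e^{j theta}, which
   is a e^{j theta} for phi = acos (a/2) as soon as 0 <= a <= 2.  The bound
   a <= 2 holds because Xi divides each column of Pt^H by half its largest
   modulus; that maximum is positive since Pt V1 W2 = 1 (the left inverse of W2
   is a right inverse), so no row of Pt vanishes. *)
From HB Require Import structures.
From mathcomp Require Import all_boot all_order all_algebra.
From mathcomp Require Import reals trigo.
From mathcomp.real_closed Require Import complex.
From mathcomp Require Import ring lra.
Set Implicit Arguments. Unset Strict Implicit. Unset Printing Implicit Defensive.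
Import Order.TTheory GRing.Theory Num.Theory.
Local Open Scope ring_scope.
Local Open Scope complex_scope.

Section ConjugateTranspose.
Variable R : realType.

Lemma ctrmx_mul m n p (A : 'M[R[i]]_(m, n)) (B : 'M[R[i]]_(n, p)) :
  ctrmx (A *m B) = ctrmx B *m ctrmx A.
Proof. by rewrite /ctrmx map_mxM trmx_mul. Qed.

Lemma ctrmxK m n (A : 'M[R[i]]_(m, n)) : ctrmx (ctrmx A) = A.
Proof. by apply/matrixP => i j; rewrite /ctrmx !mxE conjcK. Qed.

End ConjugateTranspose.

Lemma mulmx1_row_neq0 (R : nzRingType) m n (A : 'M[R]_(m, n)) (B : 'M[R]_(n, m))
    (i : 'I_m) :
  A *m B = 1%:M -> exists k, A i k != 0.
Proof.
move=> AB1; apply/existsP; apply: contraT; rewrite negb_exists => /forallP A_i0.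
have : (A *m B) i i = 0.
  by rewrite mxE big1 // => k _; move/negbNE/eqP: (A_i0 k) => ->; rewrite mul0r.
by rewrite AB1 mxE eqxx => /eqP; rewrite oner_eq0.
Qed.

Section Modulus.
Variable R : realType.

Lemma cmod_ge0 (z : R[i]) : 0 <= cmod z.
Proof. by case: z => x y; rewrite /cmod /= sqrtr_ge0. Qed.

Lemma cmodM (z w : R[i]) : cmod (z * w) = cmod z * cmod w.
Proof. exact: ComplexField.Normc.normcM. Qed.

Lemma cmod_real (x : R) : cmod x%:C = `|x|.
Proof. by rewrite /cmod /= expr0n /= addr0 sqrtr_sqr. Qed.

Lemma cmod_expj (t : R) : cmod (expj t) = 1.
Proof. by rewrite /cmod /expj /= cos2Dsin2 sqrtr1. Qed.

Lemma cmod_polar (a t : R) : 0 <= a -> cmod (a%:C * expj t) = a.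
Proof. by move=> a0; rewrite cmodM cmod_expj cmod_real mulr1 ger0_norm. Qed.

Lemma expj_split (a t : R) : 0 <= a <= 2 ->
  a%:C * expj t = expj (acos (a / 2) + t) + expj (- (acos (a / 2) - t)).
Proof.
case/andP=> a0 a2.
have cos_acos : cos (acos (a / 2)) = a / 2.
  by apply: acosK; rewrite in_itv /=; apply/andP; split; lra.
rewrite /expj /=; apply/eqP; rewrite eq_complex /= opprB !cosD !sinD cosN sinN.
rewrite cos_acos.
have a_half : a = a / 2 * 2 by rewrite mulfVK // pnatr_eq0.
move: (a / 2) a_half (sin (acos (a / 2))) => u -> s.
by apply/andP; split; apply/eqP; ring.
Qed.

Lemma cmod_le2_Xi_of_factor m n (A P : 'M[R[i]]_(m, n)) (r k : 'I_m) (c : 'I_n) :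
  A = P *m Xi_of A -> A k c != 0 -> cmod (P r c) <= 2.
Proof.
move=> AP Akc.
set M := \big[Num.max/0]_(l < m) cmod (A l c).
have le_M l : cmod (A l c) <= M by apply: le_bigmax.
have M_gt0 : 0 < M.
  apply: lt_le_trans (le_M k); rewrite lt_def cmod_ge0 andbT.
  by apply: contraNneq Akc => /ComplexField.Normc.eq0_normc ->.
have Arc : A r c = P r c * ((1 / 2) * M)%:C.
  by rewrite {1}AP /Xi_of mul_mx_diag !mxE.
have := le_M r; rewrite Arc cmodM cmod_real ger0_norm; last by lra.
move=> le_PM; have : cmod (P r c) * M <= 2 * M by lra.
by rewrite ler_pM2r.
Qed.

End Modulus.

Theorem proposition1 (R : realType) (Mt K Mr Ts : nat)
  (hMt : (0 < Mt)%N) (hK : (0 < K)%N) (hMr : (0 < Mr)%N) (hTs : (1 <= Ts)%N)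
  (Wbar : 'M[R[i]]_(Mt, K * Mr)) (hrank : \rank Wbar = Ts)
  (V1 : 'M[R[i]]_(Mt, Ts)) (W1 : 'M[R[i]]_(Ts, K * Mr))
  (hV1 : ctrmx V1 *m V1 = 1%:M) (hW1 : upper_tri W1) (hQR1 : Wbar = V1 *m W1)
  (W2 : 'M[R[i]]_Ts) (Pt : 'M[R[i]]_(Ts, Mt))
  (hW2 : ctrmx W2 *m W2 = 1%:M) (hPt : upper_tri Pt) (hQR2 : ctrmx V1 = W2 *m Pt)
  (P : 'M[R[i]]_(Mt, Ts)) (hP : ctrmx Pt = P *m Xi_of (ctrmx Pt)) :
  Wbar = P *m (Xi_of (ctrmx Pt) *m ctrmx W2 *m W1) /\
  (forall (r : 'I_Mt) (c : 'I_Ts) (a theta : R),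
     0 <= a -> P r c = a%:C * expj theta ->
     P r c = expj (acos (a / 2) + theta) + expj (- (acos (a / 2) - theta)) /\
     cmod (expj (acos (a / 2) + theta)) = 1 /\
     cmod (expj (- (acos (a / 2) - theta))) = 1).
Proof.
split; first by rewrite !mulmxA -hP -ctrmx_mul -hQR2 ctrmxK.
move=> r c a theta a0 P_rc.
have Pt_rinv : Pt *m (V1 *m W2) = 1%:M.
  by rewrite mulmxA; apply: mulmx1C; rewrite mulmxA -hQR2.
have [k Pt_ck] := mulmx1_row_neq0 c Pt_rinv.
have a2 : a <= 2.
  rewrite -(cmod_polar theta a0) -P_rc; apply: (cmod_le2_Xi_of_factor r hP (k := k)).
  by rewrite /ctrmx !mxE conjc_eq0.
by rewrite P_rc expj_split ?a0 // !cmod_expj.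
Qed.
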